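(* Let $\mathcal C$ be a Markov category with conditionals and precise supports, in which there exist a state $\mu$ and a deterministic state $o$ with $o\not\ll\mu$. Then the states $I\leadsto X$ of $\mathrm{Cond}(\mathcal C)$ are as follows: (1) all $(K,\psi,o)$ with $o\not\ll\psi_K$ are equal in $\mathrm{Cond}(\mathcal C)$, defining a unique failure state $\bot_X$; (2) if $o\ll\psi_K$, then $(K,\psi,o)=J(\psi|_K\,o)$ in $\mathrm{Cond}(\mathcal C)$, where $\psi|_K:K\to X$ is any conditional of $\psi$ with respect to $K$; (3) failure is strict: any composite with, or tensor with, a failure state is a failure state; (4) the only morphisms $I\leadsto I$ in $\mathrm{Cond}(\mathcal C)$ are $\mathrm{Id}_I$ and $\bot_I$; both are copyable, but $\bot_I$ is not discardable.
   Context: A Markov category is a symmetric monoidal category $(\mathcal C,\otimes,I)$ (assumed strict) in which every object $X$ carries a commutative comonoid $\mathrm{copy}_X$, $\mathrm{del}_X$ compatible with $\otimes$, and $I$ is terminal. A morphism $f$ is deterministic if $\mathrm{copy}_Y f=(f\otimes f)\mathrm{copy}_X$ (in a CD category, copyable means this equation and discardable means $\mathrm{del}_Y f=\mathrm{del}_X$). $\langle f,g\rangle=(f\otimes g)\mathrm{copy}_A$; marginals $f_X=(\mathrm{id}_X\otimes\mathrm{del}_Y)f$, $f_Y=(\mathrm{del}_X\otimes\mathrm{id}_Y)f$. A conditional of $f:A\to X\otimes Y$ w.r.t. $X$ is $f|_X:X\otimes A\to Y$ with $f=(\mathrm{id}_X\otimes f|_X)(\mathrm{copy}_X\otimes\mathrm{id}_A)(f_X\otimes\mathrm{id}_A)\mathrm{copy}_A$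 (symmetrically w.r.t. $Y$); $\mathcal C$ has conditionals if these always exist. $f=_\mu g$ means $\langle\mathrm{id},f\rangle\mu=\langle\mathrm{id},g\rangle\mu$; $\mu\ll\nu$ means $f=_\nu g\Rightarrow f=_\mu g$ for all $f,g$. Precise supports: for deterministic $x:I\to X$, $y:I\to Y$, any $f:X\to Y$, $\mu:I\to X$: $x\otimes y\ll\langle\mathrm{id}_X,f\rangle\mu$ iff ($x\ll\mu$ and $y\ll fx$). $\mathrm{Obs}(\mathcal C)$: same objects as $\mathcal C$; morphisms $X\leadsto Y$ are triples $(K,f,o)$, $f:X\to Y\otimes K$, $o:I\to K$ deterministic; identity $\mathrm{Id}_X=(I,\mathrm{id}_X,\mathrm{id}_I)$; composition $(K',f',o')\bullet(K,f,o)=(K'\otimes K,(f'\otimes\mathrm{id}_K)f,o'\otimes o)$; tensor of $(K,f,o):X\leadsto Y$, $(K',f',o'):X'\leadsto Y'$ is $(K'\otimes K,(\mathrm{id}_{Y'}\otimes\mathrm{swap}_{K',Y}\otimes\mathrm{id}_K)(f'\otimes f),o'\otimes o)$; $J(f)=(I,f,\mathrm{id}_I)$; copy and delete of $\mathrm{Obs}(\mathcal C)$ are $J(\mathrm{copy}_X)$, $J(\mathrm{del}_X)$. For states $(K,\psi,o),(K',\psi',o'):I\leadsto X$, $(K,\psi,o)\sim(K',\psi',o')$ iff either ($o\ll\psi_K$, $o'\ll\psi'_{K'}$ and $\psi|_Ko=\psi'|_{K'}o'$) or ($o\not\ll\psi_K$ and $o'\not\ll\psi'_{K'}$). For $F,G:X\leadsto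 Y$, $F\approx G$ iff for every $A$ and every state $\Psi:I\leadsto A\otimes X$, $(\mathrm{Id}_A\otimes F)\bullet\Psi\sim(\mathrm{Id}_A\otimes G)\bullet\Psi$. $\mathrm{Cond}(\mathcal C)=\mathrm{Obs}(\mathcal C)/{\approx}$, a CD category. *)

Set Implicit Arguments.
Unset Strict Implicit.

Record Cat := {
  ob :> Type;
  hom : ob -> ob -> Type;
  idm : forall a, hom a a;
  comp : forall a b c, hom b c -> hom a b -> hom a c;
  comp_assoc : forall a b c d (f : hom a b) (g : hom b c) (h : hom c d),
    comp h (comp g f) = comp (comp h g) f;
  comp_idl : forall a b (f : hom a b), comp (idm b) f = f;
  comp_idr : forall a b (f : hom a b), comp f (idm a) = f }.

Arguments hom {_} _ _.
Arguments idm {_} _.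
Arguments comp {_ _ _ _} _ _.
Notation "g ∘ f" := (comp g f) (at level 40, left associativity).

Record SMC := {
  smc_cat :> Cat;
  tens : smc_cat -> smc_cat -> smc_cat;
  tensm : forall a b c d : smc_cat, hom a b -> hom c d -> hom (tens a c) (tens b d);
  tunit : smc_cat;
  tensm_id : forall a b : smc_cat, tensm (idm a) (idm b) = idm (tens a b);
  tensm_comp : forall (a1 a2 a3 b1 b2 b3 : smc_cat) (f1 : hom a1 a2) (f2 : hom a2 a3)
      (g1 : hom b1 b2) (g2 : hom b2 b3),
    tensm (f2 ∘ f1) (g2 ∘ g1) = tensm f2 g2 ∘ tensm f1 g1;
  asc : forall a b c : smc_cat, hom (tens (tens a b) c) (tens a (tens b c));
  asci : forall a b c : smc_cat, hom (tens a (tens b c)) (tens (tens a b) c);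
  asc_asci : forall a b c : smc_cat, asc a b c ∘ asci a b c = idm _;
  asci_asc : forall a b c : smc_cat, asci a b c ∘ asc a b c = idm _;
  asc_nat : forall (a a' b b' c c' : smc_cat) (f : hom a a') (g : hom b b') (h : hom c c'),
    asc a' b' c' ∘ tensm (tensm f g) h
    = tensm f (tensm g h) ∘ asc a b c;
  lu : forall a : smc_cat, hom (tens tunit a) a;
  lui : forall a : smc_cat, hom a (tens tunit a);
  lu_lui : forall a : smc_cat, lu a ∘ lui a = idm _;
  lui_lu : forall a : smc_cat, lui a ∘ lu a = idm _;
  lu_nat : forall (a b : smc_cat) (f : hom a b), f ∘ lu a = lu b ∘ tensm (idm tunit) f;
  ru : forall a : smc_cat, hom (tens a tunit) a;
  rui : forall a : smc_cat, hom a (tens a tunit);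
  ru_rui : forall a : smc_cat, ru a ∘ rui a = idm _;
  rui_ru : forall a : smc_cat, rui a ∘ ru a = idm _;
  ru_nat : forall (a b : smc_cat) (f : hom a b), f ∘ ru a = ru b ∘ tensm f (idm tunit);
  br : forall a b : smc_cat, hom (tens a b) (tens b a);
  br_nat : forall (a b c d : smc_cat) (f : hom a b) (g : hom c d),
    br b d ∘ tensm f g = tensm g f ∘ br a c;
  br_inv : forall a b : smc_cat, br b a ∘ br a b = idm _;
  pentagon : forall a b c d : smc_cat,
    tensm (idm a) (asc b c d) ∘ asc a (tens b c) d ∘ tensm (asc a b c) (idm d)
    = asc a b (tens c d) ∘ asc (tens a b) c d;
  triangle : forall a b : smc_cat,
    tensm (idm a) (lu b) ∘ asc a tunit b = tensm (ru a) (idm b);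
  hexagon : forall a b c : smc_cat,
    asc b c a ∘ br a (tens b c) ∘ asc a b c
    = tensm (idm b) (br a c) ∘ asc b a c ∘ tensm (br a b) (idm c) }.

Arguments tens {_} _ _.
Arguments tensm {_ _ _ _ _} _ _.
Arguments tunit {_}.
Arguments asc {_} _ _ _.
Arguments asci {_} _ _ _.
Arguments lu {_} _.
Arguments lui {_} _.
Arguments ru {_} _.
Arguments rui {_} _.
Arguments br {_} _ _.

Notation "a ⊗ b" := (tens a b) (at level 30, right associativity).
Notation "f ⊠ g" := (tensm f g) (at level 30, right associativity).

(* the interchange (a⊗b)⊗(c⊗d) -> (a⊗c)⊗(b⊗d) ("id ⊗ swap ⊗ id") *)
Definition shuf (S : SMC) (a b c d : S) : hom ((a ⊗ b) ⊗ (c ⊗ d)) ((a ⊗ c) ⊗ (b ⊗ d)) :=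
  asci a c (b ⊗ d) ∘ (idm a ⊠ asc c b d) ∘ (idm a ⊠ (br b c ⊠ idm d))
  ∘ (idm a ⊠ asci b c d) ∘ asc a b (c ⊗ d).

Record Markov := {
  mk_smc :> SMC;
  copy : forall a : mk_smc, hom a (a ⊗ a);
  del : forall a : mk_smc, hom a tunit;
  copy_coassoc : forall a : mk_smc,
    asc a a a ∘ (copy a ⊠ idm a) ∘ copy a = (idm a ⊠ copy a) ∘ copy a;
  copy_counitl : forall a : mk_smc, lu a ∘ (del a ⊠ idm a) ∘ copy a = idm a;
  copy_counitr : forall a : mk_smc, ru a ∘ (idm a ⊠ del a) ∘ copy a = idm a;
  copy_comm : forall a : mk_smc, br a a ∘ copy a = copy a;
  (* compatibility with ⊗ (for del and for the unit this is implied by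
     terminality of the unit) *)
  copy_tens : forall a b : mk_smc, copy (a ⊗ b) = shuf a a b b ∘ (copy a ⊠ copy b);
  terminal : forall (a : mk_smc) (f g : hom a tunit), f = g }.

Arguments copy {_} _.
Arguments del {_} _.

Section MarkovDefs.
Context {M : Markov}.

Definition deterministic {A B : M} (f : hom A B) : Prop :=
  copy B ∘ f = (f ⊠ f) ∘ copy A.

Definition pairing {A X Y : M} (f : hom A X) (g : hom A Y) : hom A (X ⊗ Y) :=
  (f ⊠ g) ∘ copy A.

Definition marg1 {A X Y : M} (f : hom A (X ⊗ Y)) : hom A X :=
  ru X ∘ (idm X ⊠ del Y) ∘ f.
Definition marg2 {A X Y : M} (f : hom A (X ⊗ Y)) : hom A Y :=
  lu Y ∘ (del X ⊠ idm Y) ∘ f.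

Definition stens {X Y : M} (x : hom tunit X) (y : hom tunit Y) : hom tunit (X ⊗ Y) :=
  (x ⊠ y) ∘ lui tunit.

Definition as_eq {X Y : M} (mu : hom tunit X) (f g : hom X Y) : Prop :=
  pairing (idm X) f ∘ mu = pairing (idm X) g ∘ mu.

Definition abs_cont {X : M} (mu nu : hom tunit X) : Prop :=
  forall (Y : M) (f g : hom X Y), as_eq nu f g -> as_eq mu f g.

Definition cond_first {A X Y : M} (f : hom A (X ⊗ Y)) (h : hom (X ⊗ A) Y) : Prop :=
  f = (idm X ⊠ h) ∘ asc X X A ∘ (copy X ⊠ idm A) ∘ (marg1 f ⊠ idm A) ∘ copy A.

Definition cond_second {A X Y : M} (f : hom A (X ⊗ Y)) (h : hom (Y ⊗ A) X) : Prop :=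
  cond_first (br X Y ∘ f) h.

End MarkovDefs.

Definition has_conditionals (M : Markov) : Prop :=
  forall (A X Y : M) (f : hom A (X ⊗ Y)), exists h, cond_first f h.

Definition precise_supports (M : Markov) : Prop :=
  forall (X Y : M) (x : hom tunit X) (y : hom tunit Y) (f : hom X Y) (mu : hom tunit X),
    deterministic x -> deterministic y ->
    (abs_cont (stens x y) (pairing (idm X) f ∘ mu) <-> abs_cont x mu /\ abs_cont y (f ∘ x)).

(* Obs(C): raw triples (K, f, o); the Obs-morphisms are those with
   o deterministic (predicate isObs).                                  *)
Record ObsHom {M : Markov} (X Y : M) := {
  okey : M;
  ofun : hom X (Y ⊗ okey);
  oobs : hom tunit okey }.

Arguments okey {M X Y} _.
Arguments ofun {M X Y} _.
Arguments oobs {M X Y} _.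

Section ObsDefs.
Context {M : Markov}.

Definition isObs {X Y : M} (F : ObsHom X Y) : Prop := deterministic (oobs F).

Definition ObsId (X : M) : ObsHom X X :=
  {| okey := tunit; ofun := rui X; oobs := idm tunit |}.

Definition ObsComp {X Y Z : M} (G : ObsHom Y Z) (F : ObsHom X Y) : ObsHom X Z :=
  {| okey := okey G ⊗ okey F;
     ofun := asc Z (okey G) (okey F) ∘ (ofun G ⊠ idm (okey F)) ∘ ofun F;
     oobs := stens (oobs G) (oobs F) |}.

Definition ObsTens {X Y X' Y' : M} (F : ObsHom X Y) (G : ObsHom X' Y') : ObsHom (X ⊗ X') (Y ⊗ Y') :=
  {| okey := okey F ⊗ okey G;
     ofun := shuf Y (okey F) Y' (okey G) ∘ (ofun F ⊠ ofun G);
     oobs := stens (oobs F) (oobs G) |}.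

Definition ObsJ {X Y : M} (f : hom X Y) : ObsHom X Y :=
  {| okey := tunit; ofun := rui Y ∘ f; oobs := idm tunit |}.

(* tensor of two states I ⇝ X, I ⇝ Y as a state I ⇝ X ⊗ Y (I ⊗ I ≅ I) *)
Definition ObsStens {X Y : M} (F : ObsHom tunit X) (G : ObsHom tunit Y) : ObsHom tunit (X ⊗ Y) :=
  ObsComp (ObsTens F G) (ObsJ (lui tunit)).

Definition isFail {X : M} (P : ObsHom tunit X) : Prop :=
  ~ abs_cont (oobs P) (marg2 (ofun P)).

Definition sim {X : M} (P Q : ObsHom tunit X) : Prop :=
  (abs_cont (oobs P) (marg2 (ofun P)) /\ abs_cont (oobs Q) (marg2 (ofun Q)) /\
   exists (h : hom (okey P ⊗ tunit) X) (h' : hom (okey Q ⊗ tunit) X),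
     cond_second (ofun P) h /\ cond_second (ofun Q) h' /\
     h ∘ rui (okey P) ∘ oobs P = h' ∘ rui (okey Q) ∘ oobs Q)
  \/ (isFail P /\ isFail Q).

(* F ≈ G : equality in Cond(C) *)
Definition approx {X Y : M} (F G : ObsHom X Y) : Prop :=
  forall (A : M) (P : ObsHom tunit (A ⊗ X)), isObs P ->
    sim (ObsComp (ObsTens (ObsId A) F) P) (ObsComp (ObsTens (ObsId A) G) P).

Definition IsFailure {X : M} (P : ObsHom tunit X) : Prop :=
  exists Q : ObsHom tunit X, isObs Q /\ isFail Q /\ approx P Q.

Definition ObsCopyable {X Y : M} (F : ObsHom X Y) : Prop :=
  approx (ObsComp (ObsJ (copy Y)) F) (ObsComp (ObsTens F F) (ObsJ (copy X))).
Definition ObsDiscardable {X Y : M} (F : ObsHom X Y) : Prop :=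
  approx (ObsComp (ObsJ (del Y)) F) (ObsJ (del X)).

End ObsDefs.

(** Using conditionals, every state [ψ : I → X ⊗ K] of [C] disintegrates as
    [⟨k, id⟩ ∘ ν] with [ν = ψ_K], and its observed value is [k ∘ o].  Testing a
    state [F] of [Obs(C)] against a context [P] yields a state whose key marginal is
    (up to unitors) [ν_F ⊗ ν_P] and whose conditional is assembled from [k_F] and
    [k_P].  By precise supports, [o_F ⊗ o_P ≪ ν_F ⊗ ν_P] iff [o_F ≪ ν_F] and
    [o_P ≪ ν_P].  Hence whether a test of [F] fails, and the value it observes when
    it does not, depend only on whether [F] fails and on [k_F ∘ o_F]: two states
    agreeing on these data are equal in [Cond(C)].  This gives (1) and (2), and the
    dichotomy of scalars, since there is only one channel into [I].  The same
    computation of key marginals shows that failure propagates through composition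
    and tensor (3), and that [≈] preserves failure.  A pair [o ⋠ μ] yields a failing
    scalar; discarding it still fails while [J(del)] does not, so it is not
    discardable (4). *)

From Stdlib Require Import Classical.
Set Implicit Arguments.

Section Chains.
Context {C : Cat}.

Lemma eq_postcomp2 {a b c d : C} {x1 : hom b c} {x2 : hom a b} {y : hom a c}
  (E : x1 ∘ x2 = y) (w : hom c d) : w ∘ x1 ∘ x2 = w ∘ y.
Proof. now rewrite <- comp_assoc, E. Qed.
Lemma eq_postcomp3 {a b c d e : C} {x1 : hom c d} {x2 : hom b c} {x3 : hom a b} {y : hom a d}
  (E : x1 ∘ x2 ∘ x3 = y) (w : hom d e) : w ∘ x1 ∘ x2 ∘ x3 = w ∘ y.
Proof. rewrite <- E. now rewrite !comp_assoc. Qed.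
Lemma eq_postcomp4 {a b c d e f : C} {x1 : hom d e} {x2 : hom c d} {x3 : hom b c}
  {x4 : hom a b} {y : hom a e}
  (E : x1 ∘ x2 ∘ x3 ∘ x4 = y) (w : hom e f) : w ∘ x1 ∘ x2 ∘ x3 ∘ x4 = w ∘ y.
Proof. rewrite <- E. now rewrite !comp_assoc. Qed.
Lemma eq_postcomp5 {a b c d e f g : C} {x1 : hom e f} {x2 : hom d e} {x3 : hom c d}
  {x4 : hom b c} {x5 : hom a b} {y : hom a f}
  (E : x1 ∘ x2 ∘ x3 ∘ x4 ∘ x5 = y) (w : hom f g) : w ∘ x1 ∘ x2 ∘ x3 ∘ x4 ∘ x5 = w ∘ y.
Proof. rewrite <- E. now rewrite !comp_assoc. Qed.
Lemma eq_postcomp6 {a b c d e f g h : C} {x1 : hom f g} {x2 : hom e f} {x3 : hom d e}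
  {x4 : hom c d} {x5 : hom b c} {x6 : hom a b} {y : hom a g}
  (E : x1 ∘ x2 ∘ x3 ∘ x4 ∘ x5 ∘ x6 = y) (w : hom g h) :
  w ∘ x1 ∘ x2 ∘ x3 ∘ x4 ∘ x5 ∘ x6 = w ∘ y.
Proof. rewrite <- E. now rewrite !comp_assoc. Qed.

Lemma split_mono_cancel {a b z : C} (i : hom a b) (j : hom b a) : j ∘ i = idm a ->
  forall x y : hom z a, i ∘ x = i ∘ y -> x = y.
Proof.
  intros H x y E. rewrite <- (comp_idl x), <- (comp_idl y), <- H, <- !comp_assoc, E.
  reflexivity.
Qed.
Lemma split_epi_cancel {a b z : C} (i : hom a b) (j : hom b a) : i ∘ j = idm b ->
  forall x y : hom b z, x ∘ i = y ∘ i -> x = y.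
Proof.
  intros H x y E. rewrite <- (comp_idr x), <- (comp_idr y), <- H, !comp_assoc, E.
  reflexivity.
Qed.

Lemma inverse_unique {a b : C} {f g : hom a b} (f' g' : hom b a) :
  f = g -> f' ∘ f = idm a -> g ∘ g' = idm b -> f' = g'.
Proof.
  intros E H1 H2. rewrite <- (comp_idr f'), <- H2, <- E, comp_assoc, H1. apply comp_idl.
Qed.
End Chains.

(* Composites are kept left-associated; [crw L] rewrites with [L] (arguments
   instantiated by evars) even when its left-hand side is only the last few factors
   of a longer composite, through the [eq_postcomp] lemmas. *)
Ltac assoc_l := rewrite ?comp_assoc.
Ltac inst_evars L k := lazymatch type of L with
  | forall x : _, _ => let e := open_constr:(L _) in inst_evars e k
  | _ => k L end.
Ltac crw0 L := first [ rewrite (eq_postcomp6 L) | rewrite (eq_postcomp5 L)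
  | rewrite (eq_postcomp4 L) | rewrite (eq_postcomp3 L) | rewrite (eq_postcomp2 L)
  | rewrite L ].
Ltac crw L := assoc_l; inst_evars L ltac:(fun L' => crw0 L'); assoc_l.
Ltac crw_rev L := assoc_l; inst_evars L ltac:(fun L' => crw0 (eq_sym L')); assoc_l.
Ltac crw0_in L H := first [ rewrite (eq_postcomp6 L) in H | rewrite (eq_postcomp5 L) in H
  | rewrite (eq_postcomp4 L) in H | rewrite (eq_postcomp3 L) in H
  | rewrite (eq_postcomp2 L) in H | rewrite L in H ].
Ltac crw_in L H := rewrite ?comp_assoc in H;
  inst_evars L ltac:(fun L' => crw0_in L' H); rewrite ?comp_assoc in H.

Section MonoidalCoherence.
Context {S : SMC}.
Notation I := (tunit (s := S)).

Lemma tensm_merge {a1 a2 a3 b1 b2 b3 : S} (f1 : hom a1 a2) (f2 : hom a2 a3)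
  (g1 : hom b1 b2) (g2 : hom b2 b3) : (f2 ⊠ g2) ∘ (f1 ⊠ g1) = (f2 ∘ f1) ⊠ (g2 ∘ g1).
Proof. now rewrite tensm_comp. Qed.
Lemma tensm_split_l {a b c d : S} (f : hom a b) (g : hom c d) :
  f ⊠ g = (f ⊠ idm d) ∘ (idm a ⊠ g).
Proof. now rewrite tensm_merge, comp_idl, comp_idr. Qed.
Lemma tensm_idl_comp {a b c d : S} (f : hom c d) (g : hom b c) :
  idm a ⊠ (f ∘ g) = (idm a ⊠ f) ∘ (idm a ⊠ g).
Proof. now rewrite tensm_merge, comp_idl. Qed.
Lemma tensm_idr_comp {a b c d : S} (f : hom c d) (g : hom b c) :
  (f ∘ g) ⊠ idm a = (f ⊠ idm a) ∘ (g ⊠ idm a).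
Proof. now rewrite tensm_merge, comp_idl. Qed.
Lemma tensm_comp_l {a b c d e : S} (f : hom b c) (g : hom a b) (l : hom d e) :
  (f ∘ g) ⊠ l = (f ⊠ l) ∘ (g ⊠ idm d).
Proof. now rewrite tensm_merge, comp_idr. Qed.
Lemma tensm_comp_l' {a b c d e : S} (f : hom b c) (g : hom a b) (l : hom d e) :
  (f ∘ g) ⊠ l = (f ⊠ idm e) ∘ (g ⊠ l).
Proof. now rewrite tensm_merge, comp_idl. Qed.
Lemma tensm_comp_r {a b c d e : S} (f : hom b c) (g : hom a b) (l : hom d e) :
  l ⊠ (f ∘ g) = (l ⊠ f) ∘ (idm d ⊠ g).
Proof. now rewrite tensm_merge, comp_idr. Qed.
Lemma tensm_comp_r' {a b c d e : S} (f : hom b c) (g : hom a b) (l : hom d e) :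
  l ⊠ (f ∘ g) = (idm e ⊠ f) ∘ (l ⊠ g).
Proof. now rewrite tensm_merge, comp_idl. Qed.

Lemma asci_nat (a a' b b' c c' : S) (f : hom a a') (g : hom b b') (h : hom c c') :
  asci a' b' c' ∘ (f ⊠ (g ⊠ h)) = ((f ⊠ g) ⊠ h) ∘ asci a b c.
Proof.
  rewrite <- (comp_idr (asci a' b' c' ∘ _)), <- (asc_asci a b c).
  assoc_l. rewrite <- (comp_assoc _ (f ⊠ (g ⊠ h))), <- asc_nat. assoc_l.
  now rewrite asci_asc, comp_idl.
Qed.
Lemma lui_nat (a b : S) (f : hom a b) : lui b ∘ f = (idm I ⊠ f) ∘ lui a.
Proof.
  rewrite <- (comp_idr (lui b ∘ f)), <- (lu_lui a). assoc_l.
  rewrite <- (comp_assoc _ f), lu_nat. assoc_l. now rewrite lui_lu, comp_idl.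
Qed.
Lemma rui_nat (a b : S) (f : hom a b) : rui b ∘ f = (f ⊠ idm I) ∘ rui a.
Proof.
  rewrite <- (comp_idr (rui b ∘ f)), <- (ru_rui a). assoc_l.
  rewrite <- (comp_assoc _ f), ru_nat. assoc_l. now rewrite rui_ru, comp_idl.
Qed.

Lemma tensm_unit_inj_r {a b : S} (f g : hom a b) : f ⊠ idm I = g ⊠ idm I -> f = g.
Proof.
  intro H. rewrite <- (comp_idr f), <- (comp_idr g), <- (ru_rui a).
  assoc_l. rewrite !ru_nat, H. reflexivity.
Qed.
Lemma tensm_unit_inj_l {a b : S} (f g : hom a b) : idm I ⊠ f = idm I ⊠ g -> f = g.
Proof.
  intro H. rewrite <- (comp_idr f), <- (comp_idr g), <- (lu_lui a).
  assoc_l. rewrite !lu_nat, H. reflexivity.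
Qed.

Lemma ru_tens (a b : S) : (idm a ⊠ ru b) ∘ asc a b I = ru (a ⊗ b).
Proof.
  assert (P := f_equal (fun t => (idm a ⊠ (idm b ⊠ lu I)) ∘ t) (pentagon a b I I)).
  cbv beta in P. rewrite !comp_assoc, tensm_merge, (triangle b I), comp_idl in P.
  rewrite <- !asc_nat, tensm_id, (eq_postcomp2 (triangle (a ⊗ b) I)) in P.
  rewrite <- comp_assoc, tensm_merge, comp_idl in P.
  apply tensm_unit_inj_r, (split_mono_cancel (asc a b I) (asci a b I) (asci_asc a b I)).
  rewrite P. f_equal.
Qed.

Lemma lu_tens (b c : S) : lu (b ⊗ c) ∘ asc I b c = lu b ⊠ idm c.
Proof.
  apply tensm_unit_inj_l.
  apply (split_epi_cancel (asc I (I ⊗ b) c ∘ (asc I I b ⊠ idm c))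
           ((asci I I b ⊠ idm c) ∘ asci I (I ⊗ b) c)).
  { crw @tensm_merge. rewrite asc_asci, comp_idl, tensm_id, comp_idr. apply asc_asci. }
  rewrite tensm_idl_comp. crw (pentagon I I b c). rewrite (triangle I (b ⊗ c)).
  rewrite <- asc_nat. crw_rev @tensm_idr_comp. rewrite triangle, <- (tensm_id b c).
  symmetry; apply asc_nat.
Qed.

Lemma lu_I_tens (a : S) : lu (I ⊗ a) = idm I ⊠ lu a.
Proof.
  assert (H := lu_nat (lu a)).
  rewrite <- (comp_idl (lu (I ⊗ a))), <- (comp_idl (idm I ⊠ lu a)), <- (lui_lu a).
  rewrite <- !comp_assoc, H. reflexivity.
Qed.
Lemma lui_I_tens (a : S) : lui (I ⊗ a) = idm I ⊠ lui a.
Proof.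
  apply (split_mono_cancel (lu (I ⊗ a)) (lui (I ⊗ a))); [apply lui_lu|].
  rewrite lu_lui, lu_I_tens, tensm_merge, lu_lui, comp_idl. symmetry; apply tensm_id.
Qed.

Lemma lu_br (a : S) : lu a ∘ br a I = ru a.
Proof.
  assert (H := f_equal (fun t => lu (I ⊗ a) ∘ t) (hexagon a I I)). cbv beta in H.
  rewrite !comp_assoc, lu_tens, <- br_nat in H. crw_in (triangle a I) H.
  rewrite <- lu_nat in H. crw_in (lu_tens a I) H. crw_in @tensm_merge H.
  apply (split_mono_cancel (br a I) (br I a) (br_inv _ _)) in H.
  rewrite comp_idl in H. apply tensm_unit_inj_r in H. now symmetry.
Qed.
Lemma ru_br (a : S) : ru a ∘ br I a = lu a.
Proof. rewrite <- lu_br. crw br_inv. apply comp_idr. Qed.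
Lemma br_lui (a : S) : br I a ∘ lui a = rui a.
Proof.
  apply (split_mono_cancel (ru a) (rui a)); [apply rui_ru|].
  crw ru_br. now rewrite ru_rui, lu_lui.
Qed.
Lemma br_I_l (a : S) : br I a = rui a ∘ lu a.
Proof. rewrite <- ru_br. crw rui_ru. now rewrite comp_idl. Qed.

Lemma asc_rui (a b : S) : asc a b I ∘ rui (a ⊗ b) = idm a ⊠ rui b.
Proof.
  apply (split_mono_cancel (idm a ⊠ ru b) (idm a ⊠ rui b)).
  { rewrite tensm_merge, rui_ru, comp_idl. apply tensm_id. }
  crw ru_tens. rewrite ru_rui, tensm_merge, ru_rui, comp_idl. symmetry; apply tensm_id.
Qed.
Lemma asc_lui (b c : S) : asc I b c ∘ (lui b ⊠ idm c) = lui (b ⊗ c).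
Proof.
  apply (split_mono_cancel (lu (b ⊗ c)) (lui (b ⊗ c))); [apply lui_lu|].
  crw lu_tens. rewrite tensm_merge, lu_lui, comp_idl, tensm_id. symmetry; apply lu_lui.
Qed.
Lemma asci_lui (b c : S) : asci I b c ∘ lui (b ⊗ c) = lui b ⊠ idm c.
Proof. rewrite <- asc_lui. crw asci_asc. apply comp_idl. Qed.
Lemma lu_asci (b c : S) : (lu b ⊠ idm c) ∘ asci I b c = lu (b ⊗ c).
Proof. rewrite <- lu_tens. crw asc_asci. apply comp_idr. Qed.
Lemma triangle_inv (a b : S) : asc a I b ∘ (rui a ⊠ idm b) = idm a ⊠ lui b.
Proof.
  apply (split_mono_cancel (idm a ⊠ lu b) (idm a ⊠ lui b)).
  { rewrite tensm_merge, lui_lu, comp_idl. apply tensm_id. }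
  crw triangle. rewrite !tensm_merge, ru_rui, lu_lui, !comp_idl, !tensm_id. reflexivity.
Qed.
Lemma triangle_asci (a b : S) : (ru a ⊠ idm b) ∘ asci a I b = idm a ⊠ lu b.
Proof. rewrite <- triangle. crw asc_asci. apply comp_idr. Qed.

Lemma hexagon_inv (a b c : S) :
  asci c a b ∘ br (a ⊗ b) c ∘ asci a b c
  = (br a c ⊠ idm b) ∘ asci a c b ∘ (idm a ⊠ br b c).
Proof.
  apply (inverse_unique _ _ (hexagon c a b)).
  - crw asci_asc. rewrite comp_idr. crw br_inv. rewrite comp_idr. apply asci_asc.
  - crw @tensm_merge. rewrite br_inv, comp_idl, tensm_id, comp_idr. crw asc_asci.
    rewrite comp_idr, tensm_merge, br_inv, comp_idl. apply tensm_id.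
Qed.
Lemma hexagon_inv' (a b c : S) :
  asci c a b ∘ br (a ⊗ b) c
  = (br a c ⊠ idm b) ∘ asci a c b ∘ (idm a ⊠ br b c) ∘ asc a b c.
Proof. rewrite <- hexagon_inv. crw asci_asc. now rewrite comp_idr. Qed.

Lemma pentagon_asci (a b c d : S) :
  asc (a ⊗ b) c d ∘ (asci a b c ⊠ idm d)
  = asci a b (c ⊗ d) ∘ (idm a ⊠ asc b c d) ∘ asc a (b ⊗ c) d.
Proof.
  apply (split_mono_cancel (asc a b (c ⊗ d)) (asci a b (c ⊗ d))); [apply asci_asc|].
  crw_rev pentagon. crw @tensm_merge. rewrite asc_asci, comp_idl, tensm_id, comp_idr.
  crw asc_asci. now rewrite comp_idl.
Qed.
Lemma pentagon_asci' (a b c d : S) :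
  asc a (b ⊗ c) d ∘ (asc a b c ⊠ idm d) ∘ asci (a ⊗ b) c d
  = (idm a ⊠ asci b c d) ∘ asc a b (c ⊗ d).
Proof.
  apply (split_epi_cancel (asc (a ⊗ b) c d) (asci (a ⊗ b) c d)); [apply asc_asci|].
  crw asci_asc. rewrite comp_idr. crw_rev pentagon. crw @tensm_merge.
  rewrite asci_asc, comp_idl, tensm_id, comp_idl. reflexivity.
Qed.
End MonoidalCoherence.

Ltac merge_tensors := repeat (crw @tensm_merge); rewrite ?comp_idl, ?comp_idr.

Section Shuffle.
Context {S : SMC}.
Notation I := (tunit (s := S)).

Lemma shuf_nat (a a' b b' c c' d d' : S)
  (f : hom a a') (g : hom b b') (h : hom c c') (l : hom d d') :
  shuf a' b' c' d' ∘ ((f ⊠ g) ⊠ (h ⊠ l)) = ((f ⊠ h) ⊠ (g ⊠ l)) ∘ shuf a b c d.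
Proof.
  unfold shuf. crw_rev @asci_nat. rewrite <- !comp_assoc. f_equal.
  crw @asc_nat. merge_tensors. f_equal.
  crw @asci_nat. crw @tensm_merge. rewrite br_nat, ?comp_idl, ?comp_idr, tensm_comp_l.
  crw @asc_nat. reflexivity.
Qed.

Lemma shuf_unit_l (a c d : S) :
  (idm (a ⊗ c) ⊠ lu d) ∘ shuf a I c d ∘ (rui a ⊠ idm (c ⊗ d)) = asci a c d.
Proof.
  unfold shuf. rewrite <- (tensm_id a c). crw_rev @asci_nat. merge_tensors.
  crw @triangle. crw @tensm_merge. rewrite ru_br, comp_idl. crw @lu_asci. crw @triangle.
  crw @tensm_merge. rewrite ru_rui, comp_idl, tensm_id. apply comp_idr.
Qed.

Lemma shuf_I_l (a k k' : S) :
  shuf a I k k' = ((ru a ⊠ idm k) ⊠ lui k') ∘ asci (a ⊗ I) k k'.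
Proof.
  unfold shuf. merge_tensors. rewrite br_I_l, tensm_idr_comp. crw @triangle_inv.
  crw @lu_asci. rewrite tensm_comp_r. crw @triangle. crw @asci_nat.
  replace ((ru a ⊠ idm k) ⊠ lui k')
    with (((idm a ⊠ idm k) ⊠ lui k') ∘ ((ru a ⊠ idm k) ⊠ idm k'))
    by (rewrite !tensm_merge; now rewrite ?comp_idl, ?comp_idr).
  crw_rev @asci_nat. now rewrite (tensm_id k k').
Qed.

Lemma lu_shuf_I (K L : S) :
  lu (K ⊗ L) ∘ (lu I ⊠ idm (K ⊗ L)) ∘ shuf I K I L = lu K ⊠ lu L.
Proof.
  unfold shuf. crw @lu_asci. rewrite lu_I_tens. merge_tensors.
  crw @lu_tens. crw @tensm_merge. rewrite lu_br, comp_idl. crw @triangle_asci.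
  crw_rev @asc_nat. crw @lu_tens. crw @tensm_merge.
  rewrite ?tensm_id, ?comp_idl, ?comp_idr. reflexivity.
Qed.

Lemma shuf_lui (a b : S) :
  shuf I I a b ∘ (lui I ⊠ idm (a ⊗ b)) ∘ lui (a ⊗ b) = lui a ⊠ lui b.
Proof.
  unfold shuf. crw @asc_lui. rewrite lui_I_tens. merge_tensors.
  crw @asci_lui. crw @tensm_merge. rewrite br_lui, comp_idl. crw @triangle_inv.
  crw @asci_nat. crw @asci_lui. crw @tensm_merge.
  rewrite ?tensm_id, ?comp_idl, ?comp_idr. reflexivity.
Qed.

Lemma br_tens_shuf (g1 g2 a1 a2 : S) :
  asc (a1 ⊗ g1) g2 a2 ∘ (asci a1 g1 g2 ⊠ idm a2) ∘ (br (g1 ⊗ g2) a1 ⊠ idm a2)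
    ∘ asci (g1 ⊗ g2) a1 a2
  = (br g1 a1 ⊠ idm (g2 ⊗ a2)) ∘ shuf g1 g2 a1 a2.
Proof.
  crw @tensm_merge. rewrite hexagon_inv', comp_idl, !tensm_idr_comp. assoc_l.
  crw @asc_nat. rewrite tensm_id. unfold shuf. assoc_l.
  rewrite <- !comp_assoc. f_equal. assoc_l.
  crw @pentagon_asci. crw @asc_nat. crw @pentagon_asci'. reflexivity.
Qed.
End Shuffle.

Section MarkovUnit.
Context {M : Markov}.
Notation I := (tunit (s := M)).

Lemma del_nat {a b : M} (f : hom a b) : del b ∘ f = del a.
Proof. apply terminal. Qed.
Lemma del_I : del I = idm I.
Proof. apply terminal. Qed.

(* Encodes [a ≅ I]: as [I] is terminal, [e ∘ del a = id] makes [del a] invertible. *)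
Definition unit_iso (a : M) : Prop := exists e : hom I a, e ∘ del a = idm a.

Lemma unit_iso_hom_unique {a b : M} : unit_iso b -> forall f g : hom a b, f = g.
Proof.
  intros [e He] f g. rewrite <- (comp_idl f), <- (comp_idl g), <- He.
  rewrite <- !comp_assoc, !del_nat. reflexivity.
Qed.
Lemma unit_iso_I : unit_iso I.
Proof. exists (idm I). now rewrite del_I, comp_idl. Qed.
Lemma unit_iso_II : unit_iso (I ⊗ I).
Proof. exists (lui I). rewrite <- (lui_lu I). f_equal. apply terminal. Qed.
Lemma unit_iso_tens {a b : M} : unit_iso a -> unit_iso b -> unit_iso (a ⊗ b).
Proof.
  intros [ea Ha] [eb Hb]. exists ((ea ⊠ eb) ∘ lui I).
  assert (E : lui I ∘ del (a ⊗ b) = del a ⊠ del b)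
    by apply (unit_iso_hom_unique unit_iso_II).
  rewrite <- comp_assoc, E, tensm_merge, Ha, Hb. apply tensm_id.
Qed.
Lemma hom_II_unique {a : M} (f g : hom a (I ⊗ I)) : f = g.
Proof. apply (unit_iso_hom_unique unit_iso_II). Qed.

Lemma copy_I : copy I = lui I.
Proof. apply hom_II_unique. Qed.
Lemma rui_I_lui_I : rui I = lui I.
Proof. apply hom_II_unique. Qed.
Lemma br_I_I : br I I = idm (I ⊗ I).
Proof. apply hom_II_unique. Qed.

Lemma rui_tens_I (a : M) : rui (a ⊗ I) = rui a ⊠ idm I.
Proof.
  assert (E : ru (a ⊗ I) = ru a ⊠ idm I).
  { rewrite <- ru_tens, <- triangle. f_equal. f_equal. apply terminal. }
  apply (split_mono_cancel (ru (a ⊗ I)) (rui (a ⊗ I))); [apply rui_ru|].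
  rewrite ru_rui, E, tensm_merge, ru_rui, comp_idl. symmetry; apply tensm_id.
Qed.

Lemma del_shuf (X Y K L : M) :
  lu (K ⊗ L) ∘ (del (X ⊗ Y) ⊠ idm (K ⊗ L)) ∘ shuf X K Y L
  = (lu K ∘ (del X ⊠ idm K)) ⊠ (lu L ∘ (del Y ⊠ idm L)).
Proof.
  replace (del (X ⊗ Y)) with (lu I ∘ (del X ⊠ del Y)) by apply terminal.
  rewrite tensm_comp_l', <- (tensm_id K L). crw_rev @shuf_nat. rewrite tensm_id.
  crw @lu_shuf_I. apply tensm_merge.
Qed.

Lemma counitl (a : M) : (del a ⊠ idm a) ∘ copy a = lui a.
Proof.
  apply (split_mono_cancel (lu a) (lui a)); [apply lui_lu|].
  rewrite lu_lui. assoc_l. apply copy_counitl.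
Qed.
Lemma counitr (a : M) : (idm a ⊠ del a) ∘ copy a = rui a.
Proof.
  apply (split_mono_cancel (ru a) (rui a)); [apply rui_ru|].
  rewrite ru_rui. assoc_l. apply copy_counitr.
Qed.

Lemma deterministic_idm_I : deterministic (idm I).
Proof. apply hom_II_unique. Qed.

Lemma deterministic_stens {X Y : M} (x : hom I X) (y : hom I Y) :
  deterministic x -> deterministic y -> deterministic (stens x y).
Proof.
  unfold deterministic, stens. intros Hx Hy.
  rewrite copy_tens. crw @tensm_merge. rewrite Hx, Hy, <- tensm_merge. crw @shuf_nat.
  crw_rev @tensm_merge. rewrite <- !comp_assoc. f_equal.
  apply (unit_iso_hom_unique (unit_iso_tens unit_iso_II unit_iso_II)).
Qed.
End MarkovUnit.

Section Disintegration.
Context {M : Markov}.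
Notation I := (tunit (s := M)).

Definition disintegrates {K X : M} (ψ : hom I (X ⊗ K)) (k : hom K X) (ν : hom I K) : Prop :=
  ψ = (k ⊠ idm K) ∘ copy K ∘ ν.

Lemma disintegrates_marg2 {K X : M} (ψ : hom I (X ⊗ K)) k ν :
  disintegrates ψ k ν -> marg2 ψ = ν.
Proof.
  unfold disintegrates, marg2. intros ->. crw @tensm_merge.
  rewrite del_nat, comp_idl. crw @counitl. rewrite lu_lui. apply comp_idl.
Qed.

Lemma disintegrates_br {K X : M} (ψ : hom I (X ⊗ K)) k ν :
  disintegrates ψ k ν -> br X K ∘ ψ = (idm K ⊠ k) ∘ copy K ∘ ν.
Proof. unfold disintegrates. intros ->. crw @br_nat. now crw @copy_comm. Qed.

Lemma disintegrates_marg1_br {K X : M} (ψ : hom I (X ⊗ K)) k ν :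
  disintegrates ψ k ν -> marg1 (br X K ∘ ψ) = ν.
Proof.
  intro H. unfold marg1. rewrite <- comp_assoc, (disintegrates_br H). crw @tensm_merge.
  rewrite del_nat, comp_idl. crw @counitr. rewrite ru_rui. apply comp_idl.
Qed.

Lemma cond_first_state {X Y : M} (f : hom I (X ⊗ Y)) h : cond_first f h ->
  f = (idm X ⊠ (h ∘ rui X)) ∘ copy X ∘ marg1 f.
Proof.
  unfold cond_first. intro H. rewrite H at 1. rewrite copy_I, <- rui_I_lui_I.
  crw_rev @rui_nat. crw_rev @rui_nat. crw @asc_rui. crw @tensm_merge.
  rewrite comp_idl. reflexivity.
Qed.

Lemma cond_second_disintegrates {K X : M} (ψ : hom I (X ⊗ K)) h :
  cond_second ψ h -> disintegrates ψ (h ∘ rui K) (marg1 (br X K ∘ ψ)).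
Proof.
  unfold cond_second, disintegrates. intro H. apply cond_first_state in H.
  apply (split_mono_cancel (br X K) (br K X)); [apply br_inv|].
  rewrite H at 1. crw @br_nat. now crw @copy_comm.
Qed.

Lemma disintegrates_cond_second {K X : M} (ψ : hom I (X ⊗ K)) k ν :
  disintegrates ψ k ν -> cond_second ψ (k ∘ ru K).
Proof.
  intro H. unfold cond_second, cond_first.
  rewrite (disintegrates_marg1_br H), (disintegrates_br H), copy_I, <- rui_I_lui_I.
  crw_rev @rui_nat. crw_rev @rui_nat. crw @asc_rui. crw @tensm_merge.
  rewrite comp_idl. crw @ru_rui. now rewrite comp_idr.
Qed.

Lemma disintegrates_exists (HC : has_conditionals M) {K X : M} (ψ : hom I (X ⊗ K)) :
  exists k, disintegrates ψ k (marg2 ψ).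
Proof.
  destruct (HC _ _ _ (br X K ∘ ψ)) as [h Hh].
  assert (H := cond_second_disintegrates Hh). exists (h ∘ rui K).
  rewrite (disintegrates_marg2 H). exact H.
Qed.
End Disintegration.

Section AbsoluteContinuity.
Context {M : Markov}.
Notation I := (tunit (s := M)).

Lemma abs_cont_refl {X : M} (x : hom I X) : abs_cont x x.
Proof. intros Y f g H. exact H. Qed.

Lemma abs_cont_unit_iso {X : M} (x m : hom I X) : unit_iso X -> abs_cont x m.
Proof. intros T. rewrite (unit_iso_hom_unique T x m). apply abs_cont_refl. Qed.

Lemma stens_pairing {X Y : M} (m1 : hom I X) (m2 : hom I Y) :
  stens m1 m2 = pairing (idm X) (m2 ∘ del X) ∘ m1.
Proof.
  unfold stens, pairing. rewrite tensm_comp_r. crw @counitr. crw @rui_nat.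
  rewrite rui_I_lui_I. crw @tensm_merge. now rewrite comp_idl, comp_idr.
Qed.

Lemma abs_cont_stens (PS : precise_supports M) {X Y : M} (x m1 : hom I X) (y m2 : hom I Y) :
  deterministic x -> deterministic y ->
  (abs_cont (stens x y) (stens m1 m2) <-> abs_cont x m1 /\ abs_cont y m2).
Proof.
  intros Hx Hy. rewrite (stens_pairing m1 m2), (PS _ _ x y _ m1 Hx Hy).
  rewrite <- comp_assoc, del_nat, del_I, comp_idr. reflexivity.
Qed.

Lemma marg2_stens {F K : M} (x : hom I F) (y : hom I K) :
  lu K ∘ (del F ⊠ idm K) ∘ stens x y = y.
Proof.
  unfold stens. crw @tensm_merge.
  rewrite del_nat, del_I, comp_idl, tensm_split_l, tensm_id, comp_idl.
  crw_rev @lu_nat. crw @lu_lui. apply comp_idr.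
Qed.

Lemma pairing_stens_marg2 {F K Z : M} (x : hom I F) (y : hom I K) (a : hom K Z) :
  deterministic x -> deterministic y ->
  ((lu K ∘ (del F ⊠ idm K)) ⊠ idm Z) ∘ (idm (F ⊗ K) ⊠ (a ∘ lu K ∘ (del F ⊠ idm K)))
    ∘ copy (F ⊗ K) ∘ stens x y
  = (idm K ⊠ a) ∘ copy K ∘ y.
Proof.
  intros Dx Dy. assert (D := deterministic_stens Dx Dy). unfold deterministic in D, Dy.
  rewrite <- !comp_assoc, D, Dy. assoc_l. merge_tensors. assoc_l.
  rewrite ?marg2_stens. crw @marg2_stens. reflexivity.
Qed.

Lemma pairing_disintegration_marg2 {F K Z : M} (q : hom K F) (a : hom K Z) :
  (idm (F ⊗ K) ⊠ (a ∘ lu K ∘ (del F ⊠ idm K))) ∘ copy (F ⊗ K) ∘ (q ⊠ idm K) ∘ copy K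
  = (((q ⊠ idm K) ∘ copy K) ⊠ a) ∘ copy K.
Proof.
  rewrite copy_tens. assoc_l. rewrite !tensm_idl_comp, <- (tensm_id F K).
  crw_rev @shuf_nat. rewrite (tensm_id K K).
  rewrite (eq_postcomp2 (tensm_merge (copy F) (idm F ⊠ del F) (copy K) (idm (K ⊗ K)))).
  crw @counitr. rewrite comp_idl, (tensm_split_l (rui F) (copy K)), !tensm_id.
  crw @shuf_unit_l. crw @tensm_merge.
  rewrite comp_idl, comp_idr, (tensm_split_l q (copy K)), <- (tensm_id K K).
  crw @asci_nat. rewrite (tensm_merge (q ⊠ idm K) (idm (F ⊗ K)) (idm K) a), comp_idl, comp_idr.
  crw_rev (copy_coassoc K). crw @asci_asc.
  rewrite comp_idr, (tensm_merge (copy K) (q ⊠ idm K) (idm K) a). now rewrite comp_idr.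
Qed.

(* A test pair [a, b] on [K] is pulled back along the projection [F ⊗ K → K];
   determinism of [x ⊗ y] lets the resulting equation be projected back to [y]. *)
Lemma abs_cont_stens_r {F K : M} {x : hom I F} {y : hom I K} {q : hom K F} {mu : hom I K} :
  deterministic x -> deterministic y ->
  abs_cont (stens x y) ((q ⊠ idm K) ∘ copy K ∘ mu) -> abs_cont y mu.
Proof.
  intros Dx Dy H Z a b E.
  assert (E' : as_eq ((q ⊠ idm K) ∘ copy K ∘ mu)
                 (a ∘ lu K ∘ (del F ⊠ idm K)) (b ∘ lu K ∘ (del F ⊠ idm K))).
  { unfold as_eq, pairing in *. crw @pairing_disintegration_marg2.
    crw @pairing_disintegration_marg2.
    rewrite (tensm_split_l ((q ⊠ idm K) ∘ copy K) a), (tensm_split_l ((q ⊠ idm K) ∘ copy K) b).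
    rewrite <- !comp_assoc, (comp_assoc mu (copy K) (idm K ⊠ a)),
      (comp_assoc mu (copy K) (idm K ⊠ b)), E.
    reflexivity. }
  apply H in E'. unfold as_eq, pairing in *.
  rewrite <- (pairing_stens_marg2 a Dx Dy), <- (pairing_stens_marg2 b Dx Dy),
    <- !comp_assoc.
  f_equal. assoc_l. exact E'.
Qed.

Lemma marg2_asc {Z Y KF KP : M} (f : hom Y (Z ⊗ KF)) (g : hom I (Y ⊗ KP)) :
  marg2 (asc Z KF KP ∘ (f ⊠ idm KP) ∘ g) = ((lu KF ∘ (del Z ⊠ idm KF) ∘ f) ⊠ idm KP) ∘ g.
Proof.
  unfold marg2. rewrite <- (tensm_id KF KP). crw_rev @asc_nat. crw @lu_tens.
  rewrite !tensm_idr_comp. assoc_l. reflexivity.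
Qed.

Lemma state_I_tens {K : M} (g : hom I (I ⊗ K)) : g = (idm I ⊠ marg2 g) ∘ lui I.
Proof.
  unfold marg2. rewrite del_I, tensm_id, comp_idr. crw_rev @lui_nat. crw @lui_lu.
  now rewrite comp_idl.
Qed.
End AbsoluteContinuity.

Section Tests.
Context {M : Markov}.
Notation I := (tunit (s := M)).

(* [approx F G] is literally [forall A P, isObs P -> sim (test F P) (test G P)]. *)
Definition test {A X Y : M} (F : ObsHom X Y) (P : ObsHom I (A ⊗ X)) : ObsHom I (A ⊗ Y) :=
  ObsComp (ObsTens (ObsId A) F) P.

Definition succeeds {X : M} (P : ObsHom I X) : Prop := abs_cont (oobs P) (marg2 (ofun P)).

Definition key_conditional {X : M} (P : ObsHom I X) (k : hom (okey P) X) : Prop :=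
  disintegrates (ofun P) k (marg2 (ofun P)).

Lemma key_conditional_exists (HC : has_conditionals M) {X : M} (P : ObsHom I X) :
  exists k, key_conditional P k.
Proof. apply (disintegrates_exists HC). Qed.

Definition test_channel {A X K K2 : M} (k : hom K X) (kp : hom K2 (A ⊗ I)) :
  hom ((I ⊗ K) ⊗ K2) (A ⊗ X) :=
  (ru A ⊠ (k ∘ lu K)) ∘ (kp ⊠ idm (I ⊗ K)) ∘ br (I ⊗ K) K2.

Lemma tens_state_br (W a b : M) (c : hom I W) :
  ((idm a ⊠ c) ⊠ idm b) ∘ (rui a ⊠ idm b)
  = (br W a ⊠ idm b) ∘ asci W a b ∘ (c ⊠ idm (a ⊗ b)) ∘ lui (a ⊗ b).
Proof.
  symmetry. rewrite <- (tensm_id a b). crw @asci_nat. crw @tensm_merge.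
  rewrite br_nat, comp_idl, tensm_comp_l. crw @asci_lui. crw @tensm_merge.
  rewrite br_lui, comp_idl. reflexivity.
Qed.

Lemma disintegrates_shuf {A X K : M} (ψ : hom I (X ⊗ K)) k ν : disintegrates ψ k ν ->
  shuf A I X K ∘ (rui A ⊠ ψ)
  = ((ru A ⊠ (k ∘ lu K)) ⊠ idm (I ⊗ K)) ∘ asci (A ⊗ I) (I ⊗ K) (I ⊗ K)
    ∘ (idm (A ⊗ I) ⊠ (copy (I ⊗ K) ∘ stens (idm I) ν)) ∘ rui (A ⊗ I).
Proof.
  unfold disintegrates. intros ->. unfold stens. rewrite copy_tens.
  rewrite (comp_assoc (lui I) (idm I ⊠ ν)),
    (eq_postcomp2 (tensm_merge (idm I) (copy I) ν (copy K))),
    comp_idr, copy_I, (tensm_split_l (lui I) (copy K ∘ ν)).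
  crw_rev @lui_nat. crw @shuf_lui. rewrite !tensm_idl_comp. crw @asci_nat. merge_tensors.
  crw @lu_lui. rewrite comp_idr, rui_tens_I. crw @tensm_merge. rewrite ?comp_idl, ?comp_idr.
  rewrite <- (comp_assoc ν (copy K) (k ⊠ idm K)),
    (tensm_comp_r' (k ⊠ idm K) (copy K ∘ ν) (rui A)), <- (tensm_id A I).
  crw @shuf_nat. rewrite shuf_I_l. merge_tensors. rewrite ?tensm_id, ?comp_idl.
  reflexivity.
Qed.

Lemma disintegrates_asc {Y Z KG K2 : M} (m : hom (Y ⊗ KG) Z) (νG : hom I KG)
  (ψ2 : hom I (Y ⊗ K2)) k2 ν2 :
  disintegrates ψ2 k2 ν2 ->
  asc Z KG K2 ∘ (((m ⊠ idm KG) ∘ asci Y KG KG ∘ (idm Y ⊠ (copy KG ∘ νG)) ∘ rui Y) ⊠ idm K2)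
    ∘ ψ2
  = ((m ∘ (k2 ⊠ idm KG) ∘ br KG K2) ⊠ idm (KG ⊗ K2)) ∘ copy (KG ⊗ K2) ∘ stens νG ν2.
Proof.
  unfold disintegrates. intros ->. crw @tensm_merge. rewrite comp_idl. crw @rui_nat.
  crw @tensm_merge. rewrite comp_idl, comp_idr, (tensm_split_l k2 (copy KG ∘ νG)).
  rewrite <- (tensm_id KG KG). crw @asci_nat. rewrite !tensm_idr_comp.
  crw @asc_nat. crw @asc_nat. rewrite !tensm_id, <- !comp_assoc. f_equal. f_equal. assoc_l.
  crw @tens_state_br. crw @lui_nat. crw @lui_nat. crw @tensm_merge. crw @tensm_merge.
  rewrite !comp_idl, !comp_idr, copy_tens. unfold stens.
  crw (tensm_merge νG (copy KG) ν2 (copy K2)). crw @br_tens_shuf. reflexivity.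
Qed.

Lemma disintegrates_test {A X : M} (F : ObsHom I X) (P : ObsHom I (A ⊗ I)) k kp :
  key_conditional F k -> key_conditional P kp ->
  disintegrates (ofun (test F P)) (test_channel k kp)
    (stens (stens (idm I) (marg2 (ofun F))) (marg2 (ofun P))).
Proof.
  intros H HP. unfold disintegrates. simpl. rewrite (disintegrates_shuf H).
  apply (disintegrates_asc _ _ HP).
Qed.

Lemma test_channel_value {A X K K2 : M} (k : hom K X) (kp : hom K2 (A ⊗ I))
  (o : hom I K) (op : hom I K2) :
  test_channel k kp ∘ stens (stens (idm I) o) op = ((ru A ∘ kp ∘ op) ⊠ (k ∘ o)) ∘ lui I.
Proof.
  unfold test_channel, stens. crw @br_nat. rewrite br_I_I, comp_idr. merge_tensors.
  crw_rev @lu_nat. crw @lu_lui. now rewrite comp_idr.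
Qed.

Lemma succeeds_test (PS : precise_supports M) {A X : M} (F : ObsHom I X)
  (P : ObsHom I (A ⊗ I)) k kp :
  isObs F -> isObs P -> key_conditional F k -> key_conditional P kp ->
  (succeeds (test F P) <-> succeeds F /\ succeeds P).
Proof.
  intros DF DP H HP. unfold succeeds.
  rewrite (disintegrates_marg2 (disintegrates_test H HP)).
  rewrite (abs_cont_stens PS _ _ (deterministic_stens deterministic_idm_I DF) DP).
  rewrite (abs_cont_stens PS _ _ deterministic_idm_I DF).
  split; intuition (try apply abs_cont_refl).
Qed.

Lemma approx_of_values (HC : has_conditionals M) (PS : precise_supports M) {X : M}
  (F1 F2 : ObsHom I X) k1 k2 :
  isObs F1 -> isObs F2 -> key_conditional F1 k1 -> key_conditional F2 k2 ->
  (succeeds F1 <-> succeeds F2) -> (succeeds F1 -> k1 ∘ oobs F1 = k2 ∘ oobs F2) ->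
  approx F1 F2.
Proof.
  intros D1 D2 C1 C2 Eq V A P DP.
  destruct (key_conditional_exists HC P) as [kp CP].
  assert (E1 := succeeds_test PS D1 DP C1 CP). assert (E2 := succeeds_test PS D2 DP C2 CP).
  destruct (classic (succeeds F1 /\ succeeds P)) as [Y|N].
  - left. split; [apply E1; exact Y|]. split; [apply E2; tauto|].
    exists (test_channel k1 kp ∘ ru _), (test_channel k2 kp ∘ ru _).
    split; [apply (disintegrates_cond_second (disintegrates_test C1 CP))|].
    split; [apply (disintegrates_cond_second (disintegrates_test C2 CP))|].
    crw @ru_rui. rewrite comp_idr. crw @ru_rui. rewrite comp_idr. simpl.
    rewrite !test_channel_value, (V (proj1 Y)). reflexivity.
  - right. split; intro H; apply N; [apply E1 in H | apply E2 in H]; tauto.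
Qed.
End Tests.

Section CondStates.
Context {M : Markov}.
Notation I := (tunit (s := M)).
Hypothesis HC : has_conditionals M.
Hypothesis PS : precise_supports M.

Lemma isObs_J {X Y : M} (f : hom X Y) : isObs (ObsJ f).
Proof. apply deterministic_idm_I. Qed.

Lemma isObs_comp {X Y Z : M} (G : ObsHom Y Z) (F : ObsHom X Y) :
  isObs G -> isObs F -> isObs (ObsComp G F).
Proof. apply deterministic_stens. Qed.

Lemma isObs_Stens {X Y : M} (P : ObsHom I X) (Q : ObsHom I Y) :
  isObs P -> isObs Q -> isObs (ObsStens P Q).
Proof.
  intros DP DQ.
  apply deterministic_stens; [apply deterministic_stens; assumption | apply deterministic_idm_I].
Qed.

Lemma approx_refl {X : M} (F : ObsHom I X) : isObs F -> approx F F.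
Proof.
  intro D. destruct (key_conditional_exists HC F) as [k C].
  apply (approx_of_values HC PS D D C C); tauto.
Qed.

Lemma approx_fail (X : M) (P Q : ObsHom I X) :
  isObs P -> isObs Q -> isFail P -> isFail Q -> approx P Q.
Proof.
  intros DP DQ FP FQ.
  destruct (key_conditional_exists HC P) as [k1 C1].
  destruct (key_conditional_exists HC Q) as [k2 C2].
  apply (approx_of_values HC PS DP DQ C1 C2); unfold succeeds; unfold isFail in FP, FQ; tauto.
Qed.

Lemma approx_J_conditional (X : M) (P : ObsHom I X) (h : hom (okey P ⊗ I) X) :
  isObs P -> succeeds P -> cond_second (ofun P) h ->
  approx P (ObsJ (h ∘ rui (okey P) ∘ oobs P)).
Proof.
  intros DP SP CH.
  assert (C := cond_second_disintegrates CH). rewrite <- (disintegrates_marg2 C) in C.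
  apply (approx_of_values HC PS (F2 := ObsJ (h ∘ rui (okey P) ∘ oobs P))
           (k2 := h ∘ rui (okey P) ∘ oobs P) DP (isObs_J _) C).
  - unfold key_conditional, disintegrates; simpl.
    replace (marg2 (rui X ∘ (h ∘ rui (okey P) ∘ oobs P))) with (idm I) by apply terminal.
    rewrite comp_idr, copy_I, <- rui_I_lui_I. apply rui_nat.
  - split; intros _; [apply abs_cont_unit_iso, unit_iso_I | exact SP].
  - intros _. simpl. rewrite comp_idr. reflexivity.
Qed.

Lemma approx_succeeds {X : M} (F1 F2 : ObsHom I X) :
  isObs F1 -> isObs F2 -> approx F1 F2 -> (succeeds F1 <-> succeeds F2).
Proof.
  intros D1 D2 H. specialize (H I (ObsJ (lui I)) (isObs_J _)).
  destruct (key_conditional_exists HC F1) as [k1 C1].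
  destruct (key_conditional_exists HC F2) as [k2 C2].
  destruct (key_conditional_exists HC (ObsJ (lui I))) as [kp CP].
  assert (E1 := succeeds_test PS D1 (isObs_J _) C1 CP).
  assert (E2 := succeeds_test PS D2 (isObs_J _) C2 CP).
  assert (SP : succeeds (ObsJ (lui I))) by apply abs_cont_unit_iso, unit_iso_I.
  destruct H as [[S1 [S2 _]] | [N1 N2]].
  - apply E1 in S1. apply E2 in S2. tauto.
  - unfold isFail in N1, N2. fold (succeeds (test F1 (ObsJ (lui I)))) in N1.
    fold (succeeds (test F2 (ObsJ (lui I)))) in N2. tauto.
Qed.

Lemma IsFailure_of_isFail {X : M} (P : ObsHom I X) : isObs P -> isFail P -> IsFailure P.
Proof. intros DP FP. exists P. split; [exact DP|]. split; [exact FP|]. apply (approx_refl DP). Qed.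

(* The key marginal of [F • P] is [⟨q, id⟩ ν_P] for some [q], so [abs_cont_stens_r]
   applies. *)
Lemma isFail_comp {X Y : M} (P : ObsHom I X) (F : ObsHom X Y) :
  isObs P -> isObs F -> isFail P -> isFail (ObsComp F P).
Proof.
  unfold isFail, isObs. intros DP DF NP H. apply NP.
  destruct (key_conditional_exists HC P) as [k C].
  change (abs_cont (stens (oobs F) (oobs P))
    (marg2 (asc Y (okey F) (okey P) ∘ (ofun F ⊠ idm (okey P)) ∘ ofun P))) in H.
  rewrite marg2_asc in H. unfold key_conditional, disintegrates in C. rewrite C in H.
  rewrite ?comp_assoc, tensm_merge, comp_idl in H.
  exact (abs_cont_stens_r DF DP H).
Qed.

Lemma isFail_comp_scalar {X : M} (P : ObsHom I X) (G : ObsHom I I) :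
  isObs P -> isObs G -> isFail P -> isFail (ObsComp P G).
Proof.
  unfold isFail, isObs. intros DP DG NP H. apply NP.
  change (abs_cont (stens (oobs P) (oobs G))
    (marg2 (asc X (okey P) (okey G) ∘ (ofun P ⊠ idm (okey G)) ∘ ofun G))) in H.
  rewrite marg2_asc, (state_I_tens (ofun G)), comp_assoc, tensm_merge, comp_idl, comp_idr in H.
  apply (abs_cont_stens PS _ _ DP DG) in H. apply H.
Qed.

Lemma IsFailure_comp (X Y : M) (P : ObsHom I X) (F : ObsHom X Y) :
  isObs P -> isObs F -> isFail P -> IsFailure (ObsComp F P).
Proof.
  intros DP DF FP.
  exact (IsFailure_of_isFail (isObs_comp DF DP) (isFail_comp DP DF FP)).
Qed.

Lemma IsFailure_comp_scalar (X : M) (P : ObsHom I X) (G : ObsHom I I) :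
  isObs P -> isObs G -> isFail P -> IsFailure (ObsComp P G).
Proof.
  intros DP DG FP.
  exact (IsFailure_of_isFail (isObs_comp DP DG) (isFail_comp_scalar DP DG FP)).
Qed.

Lemma succeeds_Stens {X Y : M} (P : ObsHom I X) (Q : ObsHom I Y) :
  isObs P -> isObs Q -> succeeds (ObsStens P Q) -> succeeds P /\ succeeds Q.
Proof.
  unfold isObs, succeeds. intros DP DQ H.
  change (abs_cont (stens (stens (oobs P) (oobs Q)) (idm I))
    (marg2 (asc (X ⊗ Y) (okey P ⊗ okey Q) I
              ∘ ((shuf X (okey P) Y (okey Q) ∘ (ofun P ⊠ ofun Q)) ⊠ idm I)
              ∘ (rui (I ⊗ I) ∘ lui I)))) in H.
  rewrite marg2_asc in H. rewrite ?comp_assoc, del_shuf, tensm_merge, <- comp_assoc in H.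
  replace (rui (I ⊗ I) ∘ lui I) with ((lui I ⊠ idm I) ∘ lui I) in H
    by apply (unit_iso_hom_unique (unit_iso_tens unit_iso_II unit_iso_I)).
  rewrite comp_assoc, tensm_merge, comp_idl in H.
  apply (abs_cont_stens PS _ _ (deterministic_stens DP DQ) deterministic_idm_I) in H.
  apply (abs_cont_stens PS _ _ DP DQ), H.
Qed.

Lemma IsFailure_Stens (X Y : M) (P : ObsHom I X) (Q : ObsHom I Y) :
  isObs P -> isObs Q -> isFail P -> IsFailure (ObsStens P Q) /\ IsFailure (ObsStens Q P).
Proof.
  intros DP DQ FP. split; apply IsFailure_of_isFail; try (apply isObs_Stens; assumption);
    intro S; apply FP; [apply (succeeds_Stens DP DQ S) | apply (succeeds_Stens DQ DP S)].
Qed.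

Lemma scalar_approx_Id_or_IsFailure (F : ObsHom I I) :
  isObs F -> approx F (ObsId I) \/ IsFailure F.
Proof.
  intros DF. destruct (classic (succeeds F)) as [SF|NF].
  - left. destruct (key_conditional_exists HC F) as [k C].
    apply (approx_of_values HC PS (F2 := ObsId I) (k2 := idm I) DF deterministic_idm_I C).
    + apply hom_II_unique.
    + split; intros _; [apply abs_cont_unit_iso, unit_iso_I | exact SF].
    + intros _. apply terminal.
  - right. apply (IsFailure_of_isFail DF NF).
Qed.

Lemma approx_unit_iso {X : M} (F1 F2 : ObsHom I X) :
  unit_iso X -> unit_iso (okey F1) -> unit_iso (okey F2) -> isObs F1 -> isObs F2 ->
  approx F1 F2.
Proof.
  intros TX T1 T2 D1 D2. destruct TX as [e He].
  assert (TX : unit_iso X) by (exists e; exact He).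
  apply (approx_of_values HC PS (k1 := e ∘ del _) (k2 := e ∘ del _) D1 D2).
  - apply (unit_iso_hom_unique (unit_iso_tens TX T1)).
  - apply (unit_iso_hom_unique (unit_iso_tens TX T2)).
  - split; intros _; apply abs_cont_unit_iso; assumption.
  - intros _. apply (unit_iso_hom_unique TX).
Qed.

Lemma ObsCopyable_Id_I : ObsCopyable (ObsId I).
Proof.
  apply approx_unit_iso; simpl; repeat apply unit_iso_tens; try apply unit_iso_I;
    repeat apply deterministic_stens; apply deterministic_idm_I.
Qed.

Lemma ObsCopyable_fail_scalar (B : ObsHom I I) : isObs B -> isFail B -> ObsCopyable B.
Proof.
  intros DB FB. apply approx_fail.
  - apply isObs_comp; [apply isObs_J | exact DB].
  - apply isObs_comp; [apply deterministic_stens; exact DB | apply isObs_J].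
  - apply isFail_comp; [exact DB | apply isObs_J | exact FB].
  - rewrite copy_I. intro S. apply FB, (succeeds_Stens DB DB S).
Qed.

Lemma not_ObsDiscardable_fail_scalar (B : ObsHom I I) :
  isObs B -> isFail B -> ~ ObsDiscardable B.
Proof.
  intros DB FB H.
  apply approx_succeeds in H; [| apply isObs_comp; [apply isObs_J | exact DB] | apply isObs_J].
  apply (isFail_comp (F := ObsJ (del I)) DB (isObs_J _) FB), H.
  apply abs_cont_unit_iso, unit_iso_I.
Qed.
End CondStates.

Lemma fail_scalar_exists (M : Markov) :
  (exists (A : M) (mu o : hom tunit A), deterministic o /\ ~ abs_cont o mu) ->
  exists B : ObsHom (tunit (s := M)) tunit, isObs B /\ isFail B.
Proof.
  intros [A [mu [o [Do No]]]].
  exists {| okey := A; ofun := lui A ∘ mu; oobs := o |}. split; [exact Do|].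
  unfold isFail, marg2; simpl. rewrite del_I, tensm_id, comp_idr. crw @lu_lui.
  now rewrite comp_idl.
Qed.

Theorem proposition5p12 (M : Markov) :
  has_conditionals M -> precise_supports M ->
  (exists (A : M) (mu o : hom tunit A), deterministic o /\ ~ abs_cont o mu) ->
  (forall (X : M) (P Q : ObsHom tunit X),
      isObs P -> isObs Q -> isFail P -> isFail Q -> approx P Q) /\
  (forall (X : M) (P : ObsHom tunit X) (h : hom (okey P ⊗ tunit) X),
      isObs P -> abs_cont (oobs P) (marg2 (ofun P)) -> cond_second (ofun P) h ->
      approx P (ObsJ (h ∘ rui (okey P) ∘ oobs P))) /\
  (forall (X Y : M) (P : ObsHom tunit X) (F : ObsHom X Y),
      isObs P -> isObs F -> isFail P -> IsFailure (ObsComp F P)) /\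
  (forall (X : M) (P : ObsHom tunit X) (G : ObsHom tunit tunit),
      isObs P -> isObs G -> isFail P -> IsFailure (ObsComp P G)) /\
  (forall (X Y : M) (P : ObsHom tunit X) (Q : ObsHom tunit Y),
      isObs P -> isObs Q -> isFail P ->
      IsFailure (ObsStens P Q) /\ IsFailure (ObsStens Q P)) /\
  ((forall F : ObsHom (tunit (s := M)) tunit,
      isObs F -> approx F (ObsId tunit) \/ IsFailure F) /\
   (exists B : ObsHom (tunit (s := M)) tunit, isObs B /\ isFail B) /\
   ObsCopyable (ObsId (tunit (s := M))) /\
   (forall B : ObsHom (tunit (s := M)) tunit,
      isObs B -> isFail B -> ObsCopyable B /\ ~ ObsDiscardable B)).
Proof.
  intros HC PS Hfail.
  split; [exact (approx_fail HC PS)|].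
  split; [exact (approx_J_conditional HC PS)|].
  split; [exact (IsFailure_comp HC PS)|].
  split; [exact (IsFailure_comp_scalar HC PS)|].
  split; [exact (IsFailure_Stens HC PS)|].
  split; [exact (scalar_approx_Id_or_IsFailure HC PS)|].
  split; [exact (fail_scalar_exists Hfail)|].
  split; [exact (ObsCopyable_Id_I HC PS)|].
  intros B DB FB.
  exact (conj (ObsCopyable_fail_scalar HC PS DB FB) (not_ObsDiscardable_fail_scalar HC PS DB FB)).
Qed.
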